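(* The sub-set-operad of $\mathrm{RWS}$ generated by $A_\mu$, $A_\prec$, $A_\succ$ consists exactly of the recursively labelled red and white trees having no node with empty label set.
   Context: Red and white trees: $\mathrm{RW}(n)$ is the set of finite rooted trees (children unordered) whose nodes $z$ carry possibly empty label sets $L(z)\subseteq[n]$ partitioning $[n]$, each empty node having at least two children; labelled nodes are white, an empty node is red iff all its children are white. Composition $T_1\circ_xT_2$ ($T_1\in\mathrm{RW}(m)$, $T_2\in\mathrm{RW}(n)$): relabel $T_1$ by $y\mapsto y+n-1$ for $y>x$ and $T_2$ by $y\mapsto y+x-1$; $z\ni x$ in $T_1$, $r$ = root of $T_2$. (W) $r$ not red: remove $x$ from $L(z)$, add $L(r)$ to $L(z)$, children of $r$ become children of $z$. (R1) $r$ red, $T_1$ the single node $\{x\}$: result $T_2$. (R2) $r$ red and ($z$ has a child or $|L(z)|\ge2$): remove $x$ from $L(z)$, attach $T_2$ as child subtree of $z$. (R3) $r$ red, $z$ non-root leaf with $L(z)=\{x\}$: delete $z$, children of $r$ become children of the parent of $z$. Colours recomputed. A tree is recursively labelled if for each node the union of label sets in its subtree is an interval of integers. $\mathrm{RWS}$ is the sub-set-operad generated by $A_\mu$ (single node $\{1,2\}$), $A_\prec$ (root $\{1\}$ with child $\{2\}$), $A_\succ$ (root $\{2\}$ with child $\{1\}$), $A_\odot$ (empty red root with children $\{1\},\{2\}$). *)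

(* Red and white trees as raw rooted trees with unordered
   children, identified up to [teq] (permutation of children and of labels). *)
From mathcomp Require Import all_boot.
From Stdlib Require List.

Set Implicit Arguments.
Unset Strict Implicit.
Unset Printing Implicit Defensive.

(* A node carries its label set (a duplicate-free list of labels) and the
   list of its children (order irrelevant up to [teq]). *)
Inductive tree : Type := Node of seq nat & seq tree.

Definition labels (t : tree) : seq nat := let: Node L _ := t in L.
Definition children (t : tree) : seq tree := let: Node _ cs := t in cs.

Inductive teq : tree -> tree -> Prop :=
| teq_node L L' cs cs' :
    perm_eq L L' -> teq_list cs cs' -> teq (Node L cs) (Node L' cs')
with teq_list : seq tree -> seq tree -> Prop :=
| teq_nil : teq_list [::] [::]
| teq_cons c c' cs cs1 cs2 :
    teq c c' -> teq_list cs (cs1 ++ cs2) -> teq_list (c :: cs) (cs1 ++ c' :: cs2).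

Fixpoint all_labels (t : tree) : seq nat :=
  let: Node L cs := t in L ++ flatten (map all_labels cs).

Fixpoint subtrees (t : tree) : seq tree :=
  let: Node _ cs := t in t :: flatten (map subtrees cs).

Definition RW (n : nat) (T : tree) : Prop :=
  perm_eq (all_labels T) (iota 1 n) /\
  (forall s, List.In s (subtrees T) -> labels s = [::] -> 2 <= size (children s)).

Definition is_white (t : tree) : bool := labels t != [::].
Definition is_red (t : tree) : bool :=
  (labels t == [::]) && all is_white (children t).

Fixpoint relabel (g : nat -> nat) (t : tree) : tree :=
  let: Node L cs := t in Node (map g L) (map (relabel g) cs).

Fixpoint at_x (x : nat) (f : seq nat -> seq tree -> tree) (t : tree) : tree :=
  let: Node L cs := t in
  if x \in L then f L cs else Node L (map (at_x x f) cs).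

Definition is_leaf_x (x : nat) (t : tree) : bool :=
  match t with Node [:: y] [::] => y == x | _ => false end.

Fixpoint has_leaf_x (x : nat) (t : tree) : bool :=
  let: Node _ cs := t in has (fun c => is_leaf_x x c || has_leaf_x x c) cs.

(* rule (R3): delete the leaf {x}, children of r go to its parent *)
Fixpoint graft_R3 (x : nat) (rcs : seq tree) (t : tree) : tree :=
  let: Node L cs := t in
  Node L (flatten (map (fun c => if is_leaf_x x c then rcs
                                 else [:: graft_R3 x rcs c]) cs)).

(* partial composition T1 o_x T2, with T1 in RW(m), T2 in RW(n) *)
Definition comp (m x n : nat) (T1 T2 : tree) : tree :=
  let T1' := relabel (fun y => if x < y then y + n - 1 else y) T1 in
  let T2' := relabel (fun y => y + x - 1) T2 in
  let r := T2' in
  if ~~ is_red r then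
    (* (W) *)
    at_x x (fun L cs => Node (rem x L ++ labels r) (cs ++ children r)) T1'
  else if is_leaf_x x T1' then
    (* (R1) *) T2'
  else if has_leaf_x x T1' then
    (* (R3) *) graft_R3 x (children r) T1'
  else
    (* (R2) *) at_x x (fun L cs => Node (rem x L) (cs ++ [:: T2'])) T1'.

Definition A_unit : tree := Node [:: 1] [::].
Definition A_mu : tree := Node [:: 1; 2] [::].
Definition A_prec : tree := Node [:: 1] [:: Node [:: 2] [::]].
Definition A_succ : tree := Node [:: 2] [:: Node [:: 1] [::]].
Definition A_odot : tree := Node [::] [:: Node [:: 1] [::]; Node [:: 2] [::]].

(* gen n T : T (up to tree equality) is an element of arity n of the
   sub-set-operad generated by A_mu, A_prec, A_succ (it contains the unit
   and is closed under partial compositions). *)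
Inductive gen : nat -> tree -> Prop :=
| gen_unit : gen 1 A_unit
| gen_mu : gen 2 A_mu
| gen_prec : gen 2 A_prec
| gen_succ : gen 2 A_succ
| gen_comp m n x T1 T2 :
    gen m T1 -> gen n T2 -> 1 <= x <= m -> gen (m + n - 1) (comp m x n T1 T2)
| gen_teq n T T' : gen n T -> teq T T' -> gen n T'.

Definition is_interval (s : seq nat) : Prop :=
  exists a b, forall k, (k \in s) = (a <= k < b).

Definition recursively_labelled (T : tree) : Prop :=
  forall s, List.In s (subtrees T) -> is_interval (all_labels s).

Definition no_empty_node (T : tree) : Prop :=
  forall s, List.In s (subtrees T) -> labels s <> [::].

(* Both directions go through the invariant [good n T]: the labels of [T]
   are exactly [1..n], and every subtree has an interval of labels and a
   non-empty label set at its root.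

   Soundness ([gen_good]): the generators are good, tree equality preserves
   the labels of corresponding subtrees ([teq_covers]), and a composition of
   good trees is good ([comp_good]).  Since the inner tree has a labelled
   root, composition is rule (W): the outer labels above [x] are lifted, and
   the interval of every subtree containing [x] absorbs the block of inner
   labels ([insert_block_intv]), while all other subtrees are translated
   rigidly ([intv_translate]).

   Completeness ([good_gen]), by strong induction on [n]: if some child [c]
   carries an interval [a, b) of at least two labels, the tree is the
   composition at [a] of the tree where [c] is replaced by the leaf [a]
   (labels squeezed) with [c] relabelled onto [1, b - a] ([decomposition]);
   otherwise it is a star (a root with leaf children), which is generated by
   peeling off one label at a time with A_mu, A_prec or A_succ
   ([star_gen]). *)
From Pilot Require Import Defs.
From mathcomp Require Import all_boot zify.
From Stdlib Require List.

Set Implicit Arguments.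
Unset Strict Implicit.
Unset Printing Implicit Defensive.

(* Structural induction on trees with the induction hypothesis available for
   every child; the automatically generated principle says nothing about the
   trees stored in the nested list. *)
Definition tree_nested_ind (P : tree -> Prop)
    (H : forall L cs, (forall c, List.In c cs -> P c) -> P (Node L cs)) :
    forall t, P t :=
  fix F t := match t with
  | Node L cs => H L cs
      ((fix G (cs : seq tree) : forall c, List.In c cs -> P c :=
         match cs return forall c, List.In c cs -> P c with
         | [::] => fun c (i : False) => match i with end
         | c0 :: cs' => fun c i => match i with
                 | or_introl e => eq_ind c0 P (F c0) c e
                 | or_intror i' => G cs' c i' end
         end) cs)
  end.

(* Membership [List.In] (a Prop, since trees carry no decidable equality)
   against the sequence operations of MathComp. *)
Lemma In_cat (A : Type) (x : A) s1 s2 :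
  List.In x (s1 ++ s2) <-> List.In x s1 \/ List.In x s2.
Proof.
elim: s1 => [|y s1 IH] /=; first by split; [right|case].
by rewrite IH; tauto.
Qed.

Lemma In_map (A B : Type) (f : A -> B) (y : B) s :
  List.In y (map f s) <-> exists x, List.In x s /\ y = f x.
Proof.
elim: s => [|x s IH] /=; first by split; [|case=> ? []].
rewrite IH; split.
- by case=> [<-|[z [h ->]]]; [exists x; split; [left|] | exists z; split; [right|]].
- by case=> z [[<-|h] ->]; [left | right; exists z].
Qed.

Lemma In_flatten (A B : Type) (f : A -> seq B) (y : B) s :
  List.In y (flatten (map f s)) <-> exists x, List.In x s /\ List.In y (f x).
Proof.
elim: s => [|x s IH] /=; first by split; [|case=> ? []].
rewrite In_cat IH; split.
- by case=> [h|[z [h1 h2]]]; [exists x; split; [left|] | exists z; split; [right|]].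
- by case=> z [[<-|h1] h2]; [left | right; exists z].
Qed.

Lemma In_split (A : Type) (x : A) s :
  List.In x s -> exists s1 s2, s = s1 ++ x :: s2.
Proof.
elim: s => [|y s IH] //= [<-|/IH [s1 [s2 ->]]]; first by exists [::], s.
by exists (y :: s1), s2.
Qed.

Lemma map_In_ext (A B : Type) (f g : A -> B) s :
  (forall x, List.In x s -> f x = g x) -> map f s = map g s.
Proof.
elim: s => [|y s IH] //= H; congr (_ :: _); first by apply: H; left.
by apply: IH => x hx; apply: H; right.
Qed.

Lemma has_split (A : Type) (p : pred A) s :
  has p s -> exists s1 x s2, s = s1 ++ x :: s2 /\ p x.
Proof.
elim: s => [|y s IH] //= /orP [hy|/IH [s1 [x [s2 [-> hx]]]]]; first by exists [::], y, s.
by exists (y :: s1), x, s2.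
Qed.

Lemma hasNot_In (A : Type) (p : pred A) s :
  ~~ has p s -> forall x, List.In x s -> ~~ p x.
Proof. by elim: s => [|y s IH] //=; rewrite negb_or => /andP [hy /IH hs] x [<-|/hs]. Qed.

Lemma map_id_in (h : nat -> nat) S : {in S, forall z, h z = z} -> map h S = S.
Proof. by move=> H; rewrite -[RHS]map_id; apply/eq_in_map. Qed.

Lemma rem_cat_l (x : nat) s1 s2 : x \in s1 -> rem x (s1 ++ s2) = rem x s1 ++ s2.
Proof.
by elim: s1 => [|y s1 IH] //=; rewrite inE eq_sym; case: eqP => //= _ /IH ->.
Qed.

Lemma rem_cat_r (x : nat) s1 s2 : x \notin s1 -> rem x (s1 ++ s2) = s1 ++ rem x s2.
Proof.
elim: s1 => [|y s1 IH] //=; rewrite inE negb_or eq_sym.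
by case/andP=> /negbTE -> /IH ->.
Qed.

Lemma uniq_cat_notin (x : nat) s1 s2 : uniq (s1 ++ s2) -> x \in s1 -> x \notin s2.
Proof. by rewrite cat_uniq => /and3P [_ /hasPn h _] hx; apply/negP => /h; rewrite hx. Qed.

Lemma In_subtrees_root t : List.In t (subtrees t).
Proof. by case: t => L cs; left. Qed.

Lemma In_subtrees_child L cs c s :
  List.In c cs -> List.In s (subtrees c) -> List.In s (subtrees (Node L cs)).
Proof. by move=> hc hs; right; apply/In_flatten; exists c. Qed.

Lemma child_labels_perm c cs : List.In c cs ->
  exists v, perm_eq (flatten (map all_labels cs)) (all_labels c ++ v).
Proof.
move=> hc; case: (In_split hc) => s1 [s2 ->].
exists (flatten (map all_labels s1) ++ flatten (map all_labels s2)).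
by rewrite map_cat flatten_cat /= perm_catCA.
Qed.

Lemma mem_child_labels c cs k : List.In c cs -> k \in all_labels c ->
  k \in flatten (map all_labels cs).
Proof. by case/child_labels_perm=> v /perm_mem -> hk; rewrite mem_cat hk. Qed.

Lemma subtree_labels_perm s t : List.In s (subtrees t) ->
  exists u, perm_eq (all_labels t) (all_labels s ++ u).
Proof.
elim/tree_nested_ind: t => L cs IH /= [<-|]; first by exists [::]; rewrite cats0.
case/In_flatten=> c [hc hs]; case: (IH c hc hs) => u hu.
case: (child_labels_perm hc) => v hv; exists (u ++ v ++ L).
rewrite perm_catC !catA perm_cat2r (perm_trans hv) //.
by rewrite perm_cat2r.
Qed.

Lemma subtree_uniq s t : List.In s (subtrees t) ->
  uniq (all_labels t) -> uniq (all_labels s).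
Proof. by case/subtree_labels_perm=> u /perm_uniq ->; rewrite cat_uniq => /andP []. Qed.

Lemma subtree_mem s t k : List.In s (subtrees t) ->
  k \in all_labels s -> k \in all_labels t.
Proof. by case/subtree_labels_perm=> u /perm_mem -> hk; rewrite mem_cat hk. Qed.

Lemma labels_relabel h t : labels (relabel h t) = map h (labels t).
Proof. by case: t. Qed.

Lemma all_labels_relabel h t : all_labels (relabel h t) = map h (all_labels t).
Proof.
elim/tree_nested_ind: t => L cs IH /=; rewrite map_cat map_flatten -!map_comp.
by congr (_ ++ flatten _); apply: map_In_ext => c /IH.
Qed.

Lemma child_labels_relabel h cs :
  flatten (map all_labels (map (relabel h) cs)) = map h (flatten (map all_labels cs)).
Proof. by elim: cs => //= c cs ->; rewrite all_labels_relabel map_cat. Qed.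

Lemma subtrees_relabel h t : subtrees (relabel h t) = map (relabel h) (subtrees t).
Proof.
elim/tree_nested_ind: t => L cs IH /=; rewrite map_flatten -!map_comp.
by congr (_ :: flatten _); apply: map_In_ext => c /IH.
Qed.

Lemma relabel_comp f g t : relabel f (relabel g t) = relabel (f \o g) t.
Proof.
elim/tree_nested_ind: t => L cs IH /=; rewrite -!map_comp.
by congr Node; apply: map_In_ext => c /IH.
Qed.

Lemma relabel_id_in h t : {in all_labels t, forall y, h y = y} -> relabel h t = t.
Proof.
elim/tree_nested_ind: t => L cs IH /= H; congr Node.
  by apply: map_id_in => y hy; apply: H; rewrite mem_cat hy.
rewrite -[RHS]map_id; apply: map_In_ext => c hc; apply: IH => // y hy.
by apply: H; rewrite mem_cat (mem_child_labels hc hy) orbT.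
Qed.

Definition intv (S : seq nat) a b := forall k, (k \in S) = (a <= k < b).

Lemma intv_translate (h : nat -> nat) d e S a b : intv S a b ->
  {in S, forall y, h y + d = y + e} -> is_interval (map h S).
Proof.
move=> hS hh; case: (leqP b a) => hab.
  by exists 0, 0 => k; rewrite ltn0 andbF; apply/mapP => -[y]; rewrite hS; lia.
have /hh had : a \in S by rewrite hS; lia.
exists (a + e - d), (b + e - d) => k; apply/mapP/idP => [[y hy ->]|hk].
  by have := hh y hy; move: hy; rewrite hS; lia.
have hy : k + d - e \in S by rewrite hS; lia.
by exists (k + d - e) => //; have := hh _ hy; lia.
Qed.

Lemma intv_avoid x S a b : intv S a b -> x \notin S ->
  {in S, forall y, y < x} \/ {in S, forall y, x < y}.
Proof.
move=> hS; rewrite hS => hx.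
by case: (ltnP x a) => hxa; [right|left] => y; rewrite hS; lia.
Qed.

Lemma intv_iota S a b : uniq S -> intv S a b -> perm_eq S (iota a (b - a)).
Proof.
move=> hu hS; apply: uniq_perm => // [|k]; first exact: iota_uniq.
by rewrite hS mem_iota; lia.
Qed.

Lemma iota_intv S n : perm_eq S (iota 1 n) -> intv S 1 n.+1.
Proof. by move=> h k; rewrite (perm_mem h) mem_iota; lia. Qed.

Lemma iota1_of_intv S N : uniq S -> intv S 1 N.+1 -> perm_eq S (iota 1 N).
Proof. by move=> hu hi; have := intv_iota hu hi; rewrite subn1. Qed.

Lemma iota_cat_bound S1 S2 N : perm_eq (S1 ++ S2) (iota 1 N) ->
  {in S1, forall z, z <= N} /\ {in S2, forall z, z <= N}.
Proof.
move=> hp; have hle z : z \in S1 ++ S2 -> z <= N by rewrite (iota_intv hp); lia.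
by split=> z hz; apply: hle; rewrite mem_cat hz ?orbT.
Qed.

Definition good n T := perm_eq (all_labels T) (iota 1 n) /\
  forall s, List.In s (subtrees T) ->
    is_interval (all_labels s) /\ labels s <> [::].

Lemma good_iff n T :
  RW n T /\ recursively_labelled T /\ no_empty_node T <-> good n T.
Proof.
split=> [[[hp _] [hi hne]]|[hp hs]]; first by split=> // s hs; split; auto.
split; [split=> // s /hs [_ hne] /hne [] | split=> s /hs []] => //.
Qed.

Lemma good_uniq n T : good n T -> uniq (all_labels T).
Proof. by case=> /perm_uniq -> _; exact: iota_uniq. Qed.

Lemma good_root n T : good n T -> labels T <> [::].
Proof. by case=> _ /(_ T (In_subtrees_root T)) []. Qed.

Lemma good_arity n T : good n T -> 0 < n.
Proof.
move=> hT; have := good_root hT; case: hT => /perm_size; rewrite size_iota.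
by case: T => [[|y L] cs] //= <-.
Qed.

(* Tree equality only permutes children and labels: every subtree of [t']
   has a counterpart in [t] with the same root labels and the same labels
   below it. *)
Definition same_labels s s' :=
  perm_eq (labels s) (labels s') /\ perm_eq (all_labels s) (all_labels s').

Definition covers t t' := perm_eq (all_labels t) (all_labels t') /\
  forall s', List.In s' (subtrees t') ->
    exists s, List.In s (subtrees t) /\ same_labels s s'.

Definition covers_forest cs cs' :=
  perm_eq (flatten (map all_labels cs)) (flatten (map all_labels cs')) /\
  forall s', List.In s' (flatten (map subtrees cs')) ->
    exists s, List.In s (flatten (map subtrees cs)) /\ same_labels s s'.

Scheme teq_mut_ind := Induction for teq Sort Prop
  with teq_list_mut_ind := Induction for teq_list Sort Prop.

Lemma teq_covers t t' : teq t t' -> covers t t'.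
Proof.
move=> h; refine (@teq_mut_ind (fun t t' _ => covers t t')
  (fun cs cs' _ => covers_forest cs cs') _ _ _ t t' h) => {t t' h}.
- move=> L L' cs cs' hL _ [hl hs]; split; first by rewrite /= perm_cat.
  move=> s' /= [<-|/hs [s [h1 h2]]]; last by exists s; split; [right|].
  by exists (Node L cs); split; [left|split; rewrite //= perm_cat].
- by split.
- move=> c c' cs cs1 cs2 _ [hc hcs] _ [hl hls]; split.
    rewrite map_cat flatten_cat /= perm_sym perm_catCA perm_sym /= perm_cat //.
    by rewrite map_cat flatten_cat in hl.
  move=> s'; rewrite map_cat flatten_cat /= !In_cat => hs'.
  have [/hcs [s [h1 h2]]|/hls [s [h1 h2]]] : List.In s' (subtrees c') \/
      List.In s' (flatten (map subtrees (cs1 ++ cs2))).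
  - by rewrite map_cat flatten_cat In_cat; tauto.
  - by exists s; split => //=; rewrite In_cat; left.
  - by exists s; split => //=; rewrite In_cat; right.
Qed.

Lemma good_teq n T T' : good n T -> teq T T' -> good n T'.
Proof.
case=> hp hs /teq_covers [hp' hcov]; split.
  by apply: perm_trans hp; rewrite perm_sym.
move=> s' /hcov [s [/hs [[a [b hab]] hne] [hl ha]]]; split.
  by exists a, b => k; rewrite -(perm_mem ha).
by move=> e; apply: hne; move/perm_size: hl; rewrite e; case: (labels s).
Qed.

Lemma good_unit : good 1 A_unit.
Proof. by split=> // s [<-|] //; split=> //; exists 1, 2 => k; rewrite !inE; lia. Qed.

Lemma good_mu : good 2 A_mu.
Proof. by split=> // s [<-|] //; split=> //; exists 1, 3 => k; rewrite !inE; lia. Qed.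

Lemma good_prec : good 2 A_prec.
Proof.
split=> // s [<-|[<-|]] //; split=> //.
  by exists 1, 3 => k; rewrite !inE; lia.
by exists 2, 3 => k; rewrite !inE; lia.
Qed.

Lemma good_succ : good 2 A_succ.
Proof.
split=> // s [<-|[<-|]] //; split=> //.
  by exists 1, 3 => k; rewrite !inE; lia.
by exists 1, 2 => k; rewrite !inE; lia.
Qed.

Lemma split_at_label k cs : k \in flatten (map all_labels cs) ->
  exists cs1 c cs2, cs = cs1 ++ c :: cs2 /\ k \in all_labels c.
Proof.
move=> hk; apply: has_split.
by elim: cs hk => //= c cs IH; rewrite mem_cat => /orP [->|/IH ->]; rewrite ?orbT.
Qed.

Lemma node_labels_split L cs1 c cs2 :
  perm_eq (all_labels (Node L (cs1 ++ c :: cs2)))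
          (all_labels c ++ (L ++ flatten (map all_labels (cs1 ++ cs2)))).
Proof. by apply/permP => p; rewrite /= !map_cat !flatten_cat /= !count_cat; lia. Qed.

Lemma at_x_id x f t : x \notin all_labels t -> at_x x f t = t.
Proof.
elim/tree_nested_ind: t => L cs IH /=; rewrite mem_cat negb_or.
case/andP=> /negbTE -> hx; congr Node; rewrite -[RHS]map_id.
by apply: map_In_ext => c hc; apply: IH => //; apply: contra hx; apply: mem_child_labels.
Qed.

(* Rule (W): the root of [r] is merged into the node whose label set
   contains [x], and the children of [r] become children of that node. *)
Definition merge_root x r (L : seq nat) cs :=
  Node (rem x L ++ labels r) (cs ++ children r).

Lemma at_x_labels x r t : uniq (all_labels t) -> x \in all_labels t ->
  perm_eq (all_labels (at_x x (merge_root x r) t))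
          (rem x (all_labels t) ++ all_labels r).
Proof.
elim/tree_nested_ind: t => L cs IH hu /=; case: ifP => hxL hx.
  rewrite /= rem_cat_l // map_cat flatten_cat.
  have -> : all_labels r = labels r ++ flatten (map all_labels (children r)).
    by case: (r).
  by rewrite -!catA perm_cat2l perm_catCA.
move: hx; rewrite mem_cat hxL => /split_at_label [cs1 [c [cs2 [ecs hxc]]]].
subst cs; set O := L ++ flatten (map all_labels (cs1 ++ cs2)).
have hp := node_labels_split L cs1 c cs2.
have hu' : uniq (all_labels c ++ O) by rewrite -(perm_uniq hp).
have hxO : x \notin O by apply: uniq_cat_notin hxc.
have hid d : List.In d (cs1 ++ cs2) -> at_x x (merge_root x r) d = d.
  move=> hd; apply: at_x_id; apply: contra hxO => h.
  by rewrite /O mem_cat (mem_child_labels hd h) orbT.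
have hmap s : (forall d, List.In d s -> List.In d (cs1 ++ cs2)) ->
    map (at_x x (merge_root x r)) s = s.
  by move=> hs; rewrite -[RHS]map_id; apply: map_In_ext => d /hs /hid.
rewrite map_cat /= !hmap => [|d hd|d hd]; try by rewrite In_cat; tauto.
apply: perm_trans (node_labels_split _ _ _ _) _.
have hxF1 : x \notin flatten (map all_labels cs1).
  by apply: contra hxO; rewrite /O map_cat flatten_cat !mem_cat => ->; rewrite orbT.
have huc : uniq (all_labels c) by move: hu'; rewrite cat_uniq => /andP [].
have hc : List.In c (cs1 ++ c :: cs2) by rewrite In_cat; right; left.
have IHc := IH c hc huc hxc.
rewrite (rem_cat_r _ (negbT hxL)) !map_cat !flatten_cat /= (rem_cat_r _ hxF1).
rewrite (rem_cat_l _ hxc).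
by apply/permP => p; move/permP: IHc => /(_ p); rewrite !count_cat; lia.
Qed.

Lemma subtrees_at_x x r t s' : uniq (all_labels t) ->
  List.In s' (subtrees (at_x x (merge_root x r) t)) ->
  [\/ List.In s' (subtrees t) /\ x \notin all_labels s',
       exists2 s, List.In s (subtrees t) /\ x \in all_labels s &
                  s' = at_x x (merge_root x r) s
     | List.In s' (flatten (map subtrees (children r)))].
Proof.
elim/tree_nested_ind: t => L cs IH hu /=; case: ifP => hxL.
  rewrite /merge_root /= map_cat flatten_cat => -[<-|].
    by apply: Or32; exists (Node L cs); rewrite /= ?hxL ?mem_cat ?hxL; split=> //; left.
  rewrite In_cat => -[/In_flatten [c [hc hs]]|]; last exact: Or33.
  apply: Or31; split; first by right; apply/In_flatten; exists c.
  move: (uniq_cat_notin hu hxL); apply: contra => hx.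
  exact: mem_child_labels hc (subtree_mem hs hx).
move=> [e|].
  case: (boolP (x \in L ++ flatten (map all_labels cs))) => hx.
    by apply: Or32; exists (Node L cs); [split; [left|] | rewrite -e /= hxL].
  have e' := @at_x_id x (merge_root x r) (Node L cs) hx.
  by rewrite /= hxL e in e'; apply: Or31; rewrite e'; split; [left|exact: hx].
move/In_flatten=> [_ [/In_map [c [hc ->]] hs]].
have huc : uniq (all_labels c).
  by apply: (subtree_uniq (In_subtrees_child L hc (In_subtrees_root c)) hu).
case: (IH c hc huc hs) => [[h1 h2]|[s [h1 h2] ->]|h].
- by apply: Or31; split=> //; apply: In_subtrees_child hc h1.
- by apply: Or32; exists s => //; split=> //; apply: In_subtrees_child hc h1.
- exact: Or33.
Qed.

(* The relabellings performed by [comp m x n]: labels of the outer tree above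
   [x] move up by [n - 1], labels of the inner tree move to the block
   [x, x + n). *)
Definition lift_above x n y := if x < y then y + n - 1 else y.
Definition shift_to x y := y + x - 1.

Lemma lift_above_inj x n : 0 < n -> injective (lift_above x n).
Proof. by move=> hn y z; rewrite /lift_above; case: ifP; case: ifP; lia. Qed.

Lemma lift_above_x x n : lift_above x n x = x.
Proof. by rewrite /lift_above ltnn. Qed.

Lemma comp_W m x n T1 T2 : labels T2 <> [::] ->
  Defs.comp m x n T1 T2 =
  at_x x (merge_root x (relabel (shift_to x) T2)) (relabel (lift_above x n) T1).
Proof.
move=> hl; have hred : is_red (relabel (shift_to x) T2) = false.
  by case: T2 hl => [[|y L] cs].
by rewrite /Defs.comp hred.
Qed.

Section InsertBlock.
(* The label set below the node receiving the inner tree: the interval [S]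
   of outer labels contains [x], which is replaced by the block [A] = [1, n]
   of inner labels, shifted to [x, x + n). *)
Variables (x n : nat) (S A : seq nat) (a b : nat).
Hypotheses (hx : 0 < x) (hn : 0 < n) (hS : intv S a b) (hxS : x \in S)
  (huS : uniq S) (hA : intv A 1 n.+1) (huA : uniq A).

Let huF : uniq (map (lift_above x n) S).
Proof. by rewrite map_inj_uniq //; exact: lift_above_inj. Qed.

Lemma insert_block_uniq : uniq (rem x (map (lift_above x n) S) ++ map (shift_to x) A).
Proof.
rewrite cat_uniq (rem_uniq _ huF) /= map_inj_uniq ?huA ?andbT; last first.
  by move=> y z; rewrite /shift_to; lia.
apply/hasPn => _ /mapP [y hy ->]; rewrite (mem_rem_uniq _ huF) inE negb_and negbK.
have := hA y; rewrite hy /shift_to => /esym hy1.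
case: eqP => //= hne; apply/mapP => -[z _]; rewrite /lift_above; case: ifP; lia.
Qed.

Lemma insert_block_intv :
  intv (rem x (map (lift_above x n) S) ++ map (shift_to x) A) a (b + n - 1).
Proof.
have hxab := hxS; rewrite hS in hxab.
move=> k; rewrite mem_cat (mem_rem_uniq _ huF) inE; apply/idP/idP.
  case/orP=> [/andP [hk /mapP [y hy ->]]|/mapP [y hy ->]].
    by move: hk; rewrite hS in hy; rewrite /lift_above; case: ifP; lia.
  by rewrite hA in hy; rewrite /shift_to; lia.
move=> hk; case: (ltnP k x) => hkx.
  apply/orP; left; apply/andP; split; first by apply/eqP; lia.
  by apply/mapP; exists k; [rewrite hS; lia | rewrite /lift_above; case: ifP; lia].
case: (ltnP k (x + n)) => hkxn.
  by apply/orP; right; apply/mapP; exists (k - x + 1); [rewrite hA | rewrite /shift_to]; lia.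
apply/orP; left; apply/andP; split; first by apply/eqP; lia.
apply/mapP; exists (k - n + 1); first by rewrite hS; lia.
by rewrite /lift_above; case: ifP; lia.
Qed.

End InsertBlock.

Section CompositionGood.
Variables (m n x : nat) (T1 T2 : tree).
Hypotheses (hT1 : good m T1) (hT2 : good n T2) (hx : 0 < x <= m).

Let r := relabel (shift_to x) T2.

Let hn : 0 < n. Proof. exact: good_arity hT2. Qed.

Let hu1 : uniq (all_labels (relabel (lift_above x n) T1)).
Proof. by rewrite all_labels_relabel map_inj_uniq ?(good_uniq hT1) //; exact: lift_above_inj. Qed.

Let mem_lifted s0 : (x \in all_labels (relabel (lift_above x n) s0)) = (x \in all_labels s0).
Proof.
rewrite all_labels_relabel -{1}(lift_above_x x n) mem_map //; exact: lift_above_inj.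
Qed.

Lemma merged_subtree s0 a b : List.In s0 (subtrees T1) ->
  intv (all_labels s0) a b -> x \in all_labels s0 ->
  let s := at_x x (merge_root x r) (relabel (lift_above x n) s0) in
  uniq (all_labels s) /\ intv (all_labels s) a (b + n - 1).
Proof.
move=> hs0 hab hxs /=; have hus := subtree_uniq hs0 (good_uniq hT1).
have hp : perm_eq (all_labels (at_x x (merge_root x r) (relabel (lift_above x n) s0)))
    (rem x (map (lift_above x n) (all_labels s0)) ++ map (shift_to x) (all_labels T2)).
  rewrite -!all_labels_relabel; apply: at_x_labels; last by rewrite mem_lifted.
  by rewrite all_labels_relabel map_inj_uniq //; exact: lift_above_inj.
have [hA huA] := (iota_intv (proj1 hT2), good_uniq hT2).
rewrite (perm_uniq hp); split; first by apply: insert_block_uniq => //; lia.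
by move=> k; rewrite (perm_mem hp); apply: insert_block_intv => //; lia.
Qed.

Lemma comp_good : good (m + n - 1) (Defs.comp m x n T1 T2).
Proof.
rewrite comp_W; last exact: good_root hT2.
have [hp1 hs1] := hT1; have hs2 := proj2 hT2.
split.
  have hxT1 : x \in all_labels T1 by rewrite (perm_mem hp1) mem_iota; lia.
  case: (merged_subtree (In_subtrees_root T1) (iota_intv hp1) hxT1) => hu hi.
  by have := intv_iota hu hi; rewrite (_ : m.+1 + n - 1 - 1 = m + n - 1) //; lia.
move=> s' /(subtrees_at_x hu1) [[hs hxs]|[s [hs hxs] ->]|hs].
- (* an outer subtree avoiding [x] is translated rigidly *)
  move: hs hxs; rewrite subtrees_relabel => /In_map [s0 [hs0 ->]].
  rewrite mem_lifted labels_relabel all_labels_relabel => hxs.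
  case: (hs1 s0 hs0) => [[a [b hab]] hne]; split; last by case: (labels s0) hne.
  case: (intv_avoid hab hxs) => hside.
    apply: (intv_translate (d := 0) (e := 0) hab) => y /hside.
    by rewrite /lift_above; case: ifP; lia.
  apply: (intv_translate (d := 1) (e := n) hab) => y /hside.
  by rewrite /lift_above; case: ifP; lia.
- (* an outer subtree containing [x] receives the inner tree *)
  move: hs hxs; rewrite subtrees_relabel => /In_map [s0 [hs0 ->]].
  rewrite mem_lifted => hxs; case: (hs1 s0 hs0) => [[a [b hab]] hne]; split.
    by case: (merged_subtree hs0 hab hxs) => _ hi; exists a, (b + n - 1).
  case: (s0) hne => L0 cs0 /= hne; case: ifP => _ /=; last by case: (L0) hne.
  by rewrite /r labels_relabel; case: (rem _ _) => //=; case: (labels T2) (good_root hT2).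
- (* a subtree of the inner tree is translated to the block [x, x + n) *)
  have {}hs : List.In s' (subtrees r).
    by move: hs; rewrite /r; case: (relabel (shift_to x) T2) => L cs hs; right.
  move: hs; rewrite /r subtrees_relabel => /In_map [s0 [hs0 ->]].
  case: (hs2 s0 hs0) => [[a [b hab]] hne].
  split; last by rewrite labels_relabel; case: (labels s0) hne.
  rewrite all_labels_relabel; apply: (intv_translate (d := 1) (e := x) hab) => y _.
  by rewrite /shift_to; lia.
Qed.

End CompositionGood.

Lemma gen_good n T : gen n T -> good n T.
Proof.
elim=> {n T} [| | | |m n x T1 T2 _ h1 _ h2 hx|n T T' _ h he].
- exact: good_unit.
- exact: good_mu.
- exact: good_prec.
- exact: good_succ.
- exact: comp_good h1 h2 hx.
- exact: good_teq h he.
Qed.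

Definition leaf k := Node [:: k] [::].

Lemma relabel_leaves h K : map (relabel h) (map leaf K) = map leaf (map h K).
Proof. by rewrite -!map_comp. Qed.

Lemma teq_refl t : teq t t.
Proof.
elim/tree_nested_ind: t => L cs IH; constructor; first exact: perm_refl.
elim: cs IH => [|c cs IHl] IH; first by constructor.
apply: (teq_cons _ (cs1 := [::])); first by apply: IH; left.
by apply: IHl => d hd; apply: IH; right.
Qed.

Lemma teq_leaves K K' : perm_eq K K' -> teq_list (map leaf K) (map leaf K').
Proof.
elim: K K' => [|k K IH] K'; first by move/perm_size; case: K' => // _; constructor.
move=> hp; have hk : k \in K' by rewrite -(perm_mem hp) mem_head.
move: hp; case/splitPr: hk => K1 K2 hp; rewrite map_cat /=.
apply: teq_cons; first exact: teq_refl.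
rewrite -map_cat; apply: IH; apply/permP => p.
by move/permP: hp => /(_ p); rewrite /= !count_cat /=; lia.
Qed.

Lemma gen_star_perm N L L' K K' : gen N (Node L (map leaf K)) ->
  perm_eq L L' -> perm_eq K K' -> gen N (Node L' (map leaf K')).
Proof. by move=> hg hL hK; apply: gen_teq hg _; constructor; [|apply: teq_leaves]. Qed.

Lemma perm_rem_rcons (x : nat) s : x \in s -> perm_eq (rem x s ++ [:: x]) s.
Proof. by move=> hx; rewrite perm_catC perm_sym; exact: perm_to_rem. Qed.

Lemma comp_root m x n L cs T2 : labels T2 <> [::] -> x \in L ->
  Defs.comp m x n (Node L cs) T2 =
  Node (rem x (map (lift_above x n) L) ++ labels (relabel (shift_to x) T2))
       (map (relabel (lift_above x n)) cs ++ children (relabel (shift_to x) T2)).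
Proof.
move=> hl hx; have hx' : x \in map (lift_above x n) L.
  by rewrite -{1}(lift_above_x x n) map_f.
by rewrite comp_W //= hx'.
Qed.

Lemma lift_above_id_in x n S : {in S, forall z, z <= x} -> map (lift_above x n) S = S.
Proof. by move=> h; apply: map_id_in => z /h; rewrite /lift_above; case: ifP; lia. Qed.

Lemma exists_max (L : seq nat) : L <> [::] ->
  exists2 y, y \in L & {in L, forall z, z <= y}.
Proof.
elim: L => [|a L IH] // _; case: L IH => [|b L] IH.
  by exists a => [|z]; rewrite ?inE // => /eqP ->.
case: IH => // y hy hmax; case: (leqP y a) => hya.
  exists a => [|z]; first exact: mem_head.
  by rewrite inE => /orP [/eqP ->|/hmax]; lia.
exists y => [|z]; first by rewrite inE hy orbT.
by rewrite inE => /orP [/eqP ->|/hmax]; lia.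
Qed.


(* Closing the gap left by the block [a, b) of labels, which is contracted to
   the single label [a]; [lift_above a (b - a)] reopens it. *)
Definition squeeze a b y := if y < b then y else y - (b - a - 1).

Lemma lift_squeeze a b y : a < b -> y < a \/ b <= y ->
  lift_above a (b - a) (squeeze a b y) = y.
Proof. by rewrite /squeeze /lift_above; case: ifP; case: ifP; lia. Qed.

Lemma shift_to_1 x : 0 < x -> shift_to x 1 = x.
Proof. by rewrite /shift_to; lia. Qed.

Lemma shift_to_2 x : 0 < x -> shift_to x 2 = x.+1.
Proof. by rewrite /shift_to; lia. Qed.

Definition stars_generated n := forall L K, L <> [::] ->
  perm_eq (L ++ K) (iota 1 n) -> gen n (Node L (map leaf K)).

Lemma gen_comp2 n x T1 T2 : gen n.+1 T1 -> gen 2 T2 -> 0 < x <= n.+1 ->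
  gen n.+2 (Defs.comp n.+1 x 2 T1 T2).
Proof. by move=> h1 h2 hx; have := gen_comp h1 h2 hx; rewrite addn2 subn1. Qed.

(* [lia] first translates every boolean hypothesis through [zify], including
   the facts [uniq _] and [perm_eq _ _] about label sequences that abound
   below and are irrelevant to arithmetic; dropping them keeps it fast. *)
Ltac nat_lia :=
  repeat match goal with
  | H : is_true (uniq _) |- _ => clear H
  | H : is_true (perm_eq _ _) |- _ => clear H
  end; lia.

Section Star.
(* The star with root labels [L] and leaves [K] on the labels [1, n + 2] is
   obtained by composing a star with one label less with a generator. *)
Variables (n : nat) (L K : seq nat).
Hypothesis hp : perm_eq (L ++ K) (iota 1 n.+2).
Hypothesis IH : stars_generated n.+1.

Let hu : uniq (L ++ K). Proof. by rewrite (perm_uniq hp) iota_uniq. Qed.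
Let uL : uniq L. Proof. by move: hu; rewrite cat_uniq => /andP []. Qed.
Let uK : uniq K. Proof. by move: hu; rewrite cat_uniq => /and3P []. Qed.
Let memLK k : (k \in L) || (k \in K) = (0 < k < n.+3).
Proof. by rewrite -mem_cat (iota_intv hp). Qed.
Let disjLK k : k \in L -> k \notin K.
Proof. exact: uniq_cat_notin hu. Qed.

Let rem_top : n.+2 \in L -> perm_eq (rem n.+2 L ++ K) (iota 1 n.+1).
Proof.
move=> htop; rewrite -(perm_cons n.+2); apply: perm_trans (_ : perm_eq _ (L ++ K)) _.
  by apply/permP => p; move/permP: (perm_to_rem htop) => /(_ p); rewrite /= !count_cat; nat_lia.
apply: perm_trans hp _.
have -> : iota 1 n.+2 = iota 1 n.+1 ++ [:: n.+2] by rewrite -[n.+2]addn1 iotaD add1n addn1.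
by apply/permP => p; rewrite count_cat /=; nat_lia.
Qed.

Lemma star_mu : n.+2 \in L -> n.+1 \in L -> gen n.+2 (Node L (map leaf K)).
Proof.
move=> htop hnext; have hrem := rem_top htop.
have hnext' : n.+1 \in rem n.+2 L.
  by rewrite (mem_rem_uniq _ uL) inE hnext andbT; apply/eqP; nat_lia.
have [hleL hleK] := iota_cat_bound hrem.
have hT' : gen n.+1 (Node (rem n.+2 L) (map leaf K)).
  by apply: IH hrem => e; rewrite e in hnext'.
have := gen_comp2 hT' gen_mu (x := n.+1) ltac:(nat_lia).
rewrite comp_root // relabel_leaves !lift_above_id_in //.
rewrite /= shift_to_1 // shift_to_2 // cats0 => hg; apply: gen_star_perm hg _ _ => //.
apply/permP => p; move/permP: (perm_to_rem htop) => /(_ p).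
by move/permP: (perm_to_rem hnext') => /(_ p); rewrite /= !count_cat /=; nat_lia.
Qed.

Lemma star_succ : n.+2 \in L -> n.+1 \in K -> gen n.+2 (Node L (map leaf K)).
Proof.
move=> htop hnext; set L' := n.+1 :: rem n.+2 L; set K' := rem n.+1 K.
have hp' : perm_eq (L' ++ K') (iota 1 n.+1).
  apply: (perm_trans _ (rem_top htop)); apply/permP => p.
  by move/permP: (perm_to_rem hnext) => /(_ p); rewrite /L' /K' /= !count_cat /=; nat_lia.
have [hleL hleK] := iota_cat_bound hp'.
have := gen_comp2 (IH (L := L') (K := K') ltac:(by []) hp') gen_succ (x := n.+1) ltac:(nat_lia).
rewrite comp_root ?mem_head // relabel_leaves !lift_above_id_in //.
rewrite /= eqxx shift_to_1 // shift_to_2 // -[[:: Node _ _]]/(map leaf [:: n.+1]) -map_cat.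
by move=> hg; apply: gen_star_perm hg (perm_rem_rcons htop) (perm_rem_rcons hnext).
Qed.

Section Prec.
(* Case of a largest root label [y < n + 2]: then [y + 1] is a leaf, and the
   star is obtained by grafting [A_prec] at [y]. *)
Variable y : nat.
Hypotheses (hL : L <> [::]) (hyL : y \in L) (hmax : {in L, forall z, z <= y}) (hyn : y < n.+2).

Let hy1K : y.+1 \in K.
Proof.
have := memLK y.+1; have := memLK y; rewrite hyL /=.
by case: (boolP (y.+1 \in L)) => [/hmax|] /=; nat_lia.
Qed.

Let rest_out z : z \in rem y.+1 K -> z < y \/ y.+2 <= z.
Proof.
rewrite (mem_rem_uniq _ uK) inE => /andP [/eqP hz1 hz2].
have hzy : z != y by apply: contraTneq hz2 => ->; exact: disjLK.
by move/eqP: hzy; nat_lia.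
Qed.

Let K' := map (squeeze y y.+2) (rem y.+1 K).

Let lift_K' : map (lift_above y 2) K' = rem y.+1 K.
Proof.
rewrite -map_comp; apply: map_id_in => z /rest_out hz /=.
by have := @lift_squeeze y y.+2 z (leqnSn _) hz; rewrite (_ : y.+2 - y = 2) //; nat_lia.
Qed.

Let perm_K' : perm_eq (L ++ K') (iota 1 n.+1).
Proof.
have in_rest z : z \in K -> z != y.+1 -> z \in rem y.+1 K.
  by move=> hz hzy; rewrite (mem_rem_uniq _ uK) inE hzy.
apply: iota1_of_intv.
  rewrite cat_uniq uL map_inj_in_uniq ?rem_uniq ?andbT //=; last first.
    by move=> z1 z2 /rest_out h1 /rest_out h2; rewrite /squeeze; case: ifP; case: ifP; nat_lia.
  apply/hasPn => _ /mapP [z hz ->]; rewrite /squeeze.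
  case: (rest_out hz) => h; [rewrite ifT; last nat_lia | rewrite ifF; last nat_lia].
    by apply: contraTN (mem_rem hz); exact: disjLK.
  by apply/negP => /hmax; nat_lia.
move=> k; rewrite mem_cat; apply/idP/idP.
  case/orP => [hk|/mapP [z hz ->]].
    by have := memLK k; rewrite hk /= => /esym; have := hmax hk; nat_lia.
  have := memLK z; rewrite (mem_rem hz) orbT => /esym.
  by case: (rest_out hz) => h; rewrite /squeeze; case: ifP; nat_lia.
move=> hk; case: (boolP (k \in L)) => //= hkL; apply/mapP.
case: (leqP k y) => hky.
  exists k; last by rewrite /squeeze ifT //; nat_lia.
  apply: in_rest; last by apply/eqP; nat_lia.
  by have := memLK k; rewrite (negbTE hkL) /=; nat_lia.
exists k.+1; last by rewrite /squeeze ifF //; nat_lia.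
apply: in_rest; last by apply/eqP; nat_lia.
have := memLK k.+1; case: (boolP (k.+1 \in L)) => [/hmax|] /=; nat_lia.
Qed.

Lemma star_prec : gen n.+2 (Node L (map leaf K)).
Proof.
have hy0 : 0 < y by have := memLK y; rewrite hyL /=; nat_lia.
have := gen_comp2 (IH hL perm_K') gen_prec (x := y) ltac:(nat_lia).
rewrite comp_root // relabel_leaves lift_K' lift_above_id_in //.
rewrite /= shift_to_1 // shift_to_2 // -[[:: Node _ _]]/(map leaf [:: y.+1]) -map_cat.
by move=> hg; apply: gen_star_perm hg (perm_rem_rcons hyL) (perm_rem_rcons hy1K).
Qed.

End Prec.

End Star.

Lemma star_gen N : stars_generated N.
Proof.
elim: N => [|N IH] L K hL hp.
  by move/perm_size: hp; rewrite size_cat; case: (L) hL.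
case: N IH hp => [|n] IH hp.
  move/perm_size: (hp); rewrite size_cat; case: L hL hp => [|a [|b L]] //= _.
  case: K => //= hp _; have := perm_mem hp a; rewrite !inE eqxx => /esym /eqP ->.
  exact: gen_unit.
have [y hyL hmax] := exists_max hL.
have := iota_intv hp y; rewrite mem_cat hyL /= => /esym hy.
case: (ltnP y n.+2) => hyn; first exact: (star_prec hp IH hL hyL hmax hyn).
have htop : n.+2 \in L by rewrite (_ : n.+2 = y) //; lia.
case: (boolP (n.+1 \in L)) => hnext; first exact: (star_mu hp IH htop hnext).
apply: (star_succ hp IH htop); have := iota_intv hp n.+1.
by rewrite mem_cat (negbTE hnext) /=; lia.
Qed.

Section Decomposition.
(* A tree with a child [c] carrying the interval [a, b) of at least two
   labels is the composition at [a] of the outer tree, where [c] is replaced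
   by the leaf [a] and the gap [a, b) is squeezed, with the inner tree [c]
   relabelled onto [1, b - a]. *)
Variables (n a b : nat) (L : seq nat) (cs1 cs2 : seq tree) (c : tree).
Hypotheses (hT : good n (Node L (cs1 ++ c :: cs2)))
  (hc : intv (all_labels c) a b) (hab : a.+1 < b).

Let O := L ++ flatten (map all_labels (cs1 ++ cs2)).

Let hpT : perm_eq (all_labels (Node L (cs1 ++ c :: cs2))) (all_labels c ++ O).
Proof. exact: node_labels_split. Qed.

Let huO : uniq (all_labels c ++ O).
Proof. by rewrite -(perm_uniq hpT); exact: good_uniq hT. Qed.

Let memT y : (y \in all_labels c) || (y \in O) = (0 < y <= n).
Proof. by rewrite -mem_cat -(perm_mem hpT) (iota_intv (proj1 hT)); lia. Qed.

Let hO y : y \in O -> (y < a \/ b <= y) /\ 0 < y <= n.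
Proof.
move=> hy; have := memT y; rewrite hy orbT => /esym ->; split=> //.
have : y \notin all_labels c by apply: contraL hy; exact: uniq_cat_notin huO.
by rewrite hc; lia.
Qed.

Let hOc y : 0 < y <= n -> y < a \/ b <= y -> y \in O.
Proof. by rewrite -memT hc; case/orP => [/andP []|//]; lia. Qed.

Let in_O d y : List.In d (cs1 ++ cs2) -> y \in all_labels d -> y \in O.
Proof. by move=> hd hy; rewrite /O mem_cat (mem_child_labels hd hy) orbT. Qed.

Let hab_range : 0 < a /\ b <= n.+1.
Proof.
have := memT a; have := memT b.-1; rewrite !hc.
by case: (a \in O); case: (b.-1 \in O); lia.
Qed.

Let sizeO : 0 < size O.
Proof. by rewrite size_cat; case: L (good_root hT). Qed.

Let hsub s : List.In s (subtrees c) ->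
  is_interval (all_labels s) /\ labels s <> [::].
Proof.
by move=> hs; apply: (proj2 hT); apply: In_subtrees_child hs; rewrite In_cat; right; left.
Qed.

Let huc : uniq (all_labels c).
Proof. by move: huO; rewrite cat_uniq => /andP []. Qed.

Let size_n : n = (b - a) + size O.
Proof.
move/perm_size: (proj1 hT); rewrite (perm_size hpT) size_iota size_cat.
by rewrite (perm_size (intv_iota huc hc)) size_iota.
Qed.

Let k := b - a.
Let m := n - k + 1.
Let outer := Node (map (squeeze a b) L)
  (map (relabel (squeeze a b)) cs1 ++ leaf a :: map (relabel (squeeze a b)) cs2).
Let inner := relabel (fun y => y - (a - 1)) c.

Let decomposition_eq : Defs.comp m a k outer inner = Node L (cs1 ++ c :: cs2).
Proof.
rewrite comp_W; last first.
  by rewrite /inner labels_relabel; have := proj2 (hsub (In_subtrees_root c)); case: (labels c).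
have -> : relabel (shift_to a) inner = c.
  by rewrite /inner relabel_comp; apply: relabel_id_in => y; rewrite hc /shift_to /=; lia.
have lift_sq y : y \in O -> lift_above a k (squeeze a b y) = y.
  by move=> /hO [hy _]; apply: lift_squeeze; lia.
have lift_forest s : (forall d, List.In d s -> List.In d (cs1 ++ cs2)) ->
    map (relabel (lift_above a k)) (map (relabel (squeeze a b)) s) = s.
  move=> hs; rewrite -map_comp -[RHS]map_id; apply: map_In_ext => d hd /=.
  by rewrite relabel_comp; apply: relabel_id_in => y hy /=; apply/lift_sq/(in_O (hs _ hd)).
have hout d : List.In d (cs1 ++ cs2) -> a \notin all_labels d.
  by move=> hd; apply/negP => /(in_O hd) /hO; lia.
have haL : a \notin L.
  apply/negP => ha; have /hO : a \in O by rewrite /O mem_cat ha.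
  lia.
rewrite /outer /= map_cat /= !lift_forest => [|d hd|d hd]; try by rewrite In_cat; tauto.
rewrite -map_comp map_id_in => [|y hy]; last by apply: lift_sq; rewrite mem_cat hy.
have at_x_forest s : (forall d, List.In d s -> List.In d (cs1 ++ cs2)) ->
    map (at_x a (merge_root a c)) s = s.
  move=> hs; rewrite -[RHS]map_id; apply: map_In_ext => d /hs hd.
  exact/at_x_id/hout.
rewrite /= (negbTE haL) lift_above_x map_cat /= inE eqxx /=.
rewrite !at_x_forest => [|d hd|d hd]; try by rewrite In_cat; tauto.
by rewrite /merge_root /= eqxx; case: (c).
Qed.

Let good_inner : good k inner.
Proof.
split.
  rewrite /inner all_labels_relabel; apply: iota1_of_intv.
    by rewrite map_inj_in_uniq // => y z; rewrite !hc; lia.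
  move=> j; apply/mapP/idP => [[y]|hj]; first by rewrite hc /k => hy ->; lia.
  by exists (j + a - 1); [rewrite hc | ]; move: hj; rewrite /k; lia.
move=> s; rewrite /inner subtrees_relabel => /In_map [s0 [hs0 ->]].
have [[a' [b' hab']] hne] := hsub hs0.
split; last by rewrite labels_relabel; case: (labels s0) hne.
rewrite all_labels_relabel; apply: (intv_translate (d := a - 1) (e := 0) hab') => y hy.
by have := subtree_mem hs0 hy; rewrite hc; lia.
Qed.

Let outer_perm : perm_eq (all_labels outer) (iota 1 m).
Proof.
apply: (@perm_trans _ (a :: map (squeeze a b) O)).
  apply/permP => p; rewrite /outer /O /= !map_cat !flatten_cat /=.
  by rewrite !child_labels_relabel /= !map_cat !count_cat /=; lia.
apply: iota1_of_intv.
  rewrite /= map_inj_in_uniq; last first.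
    by move=> y z /hO [hy _] /hO [hz _]; rewrite /squeeze; case: ifP; case: ifP; lia.
  rewrite (subseq_uniq (suffix_subseq _ _) huO) andbT.
  by apply/negP => /mapP [y /hO [hy _]]; rewrite /squeeze; case: ifP; lia.
move=> j; rewrite inE; have [ha hb] := hab_range; apply/idP/idP.
  by case/orP=> [/eqP ->|/mapP [y /hO [hy hyn] ->]]; rewrite /m /k /squeeze; try case: ifP; lia.
move=> hj; case: (ltngtP j a) => hja //=.
  apply/mapP; exists j; last by rewrite /squeeze; case: ifP; lia.
  by apply: hOc; move: hj; rewrite /m /k; lia.
apply/mapP; exists (j + (b - a - 1)); last by rewrite /squeeze; case: ifP; lia.
by apply: hOc; move: hj; rewrite /m /k; lia.
Qed.

Let squeezed_subtree d s : List.In d (cs1 ++ cs2) ->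
  List.In s (subtrees (relabel (squeeze a b) d)) ->
  is_interval (all_labels s) /\ labels s <> [::].
Proof.
move=> hd; rewrite subtrees_relabel => /In_map [s0 [hs0 ->]].
have hs0T : List.In s0 (subtrees (Node L (cs1 ++ c :: cs2))).
  by apply: In_subtrees_child hs0; move: hd; rewrite !In_cat /=; tauto.
have [[a' [b' hab']] hne] := proj2 hT s0 hs0T.
split; last by rewrite labels_relabel; case: (labels s0) hne.
have hsO y : y \in all_labels s0 -> y < a \/ b <= y.
  by move=> hy; case: (hO (in_O hd (subtree_mem hs0 hy))).
have ha : a \notin all_labels s0 by apply/negP => /hsO; lia.
rewrite all_labels_relabel; case: (intv_avoid hab' ha) => hside.
  by apply: (intv_translate (d := 0) (e := 0) hab') => y /hside; rewrite /squeeze; case: ifP; lia.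
apply: (intv_translate (d := b - a - 1) (e := 0) hab') => y hy.
by have := hside y hy; have := hsO y hy; rewrite /squeeze; case: ifP; lia.
Qed.

Let good_outer : good m outer.
Proof.
split=> // s; rewrite /outer => -[<-|].
  split; last by rewrite /=; case: (L) (good_root hT).
  by exists 1, m.+1; apply: iota_intv outer_perm.
move/In_flatten => [d []]; rewrite In_cat => -[/In_map [d0 [hd0 ->]]|[<-|/In_map [d0 [hd0 ->]]]].
- by apply: squeezed_subtree; rewrite In_cat; left.
- by case=> // <-; split=> //; exists a, a.+1 => j; rewrite !inE; lia.
- by apply: squeezed_subtree; rewrite In_cat; right.
Qed.

Lemma decomposition : exists m' k' T1 T2,
  [/\ good m' T1, good k' T2, m' < n /\ k' < n, 0 < a <= m' & m' + k' - 1 = n] /\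
  Defs.comp m' a k' T1 T2 = Node L (cs1 ++ c :: cs2).
Proof.
exists m, k, outer, inner; split; last exact: decomposition_eq.
have [ha hb] := hab_range; split; [exact: good_outer | exact: good_inner | | |];
  by move: size_n sizeO; rewrite /m /k; lia.
Qed.

End Decomposition.

Lemma small_leaf t : (forall s, List.In s (subtrees t) -> labels s <> [::]) ->
  size (all_labels t) <= 1 -> exists k, t = leaf k.
Proof.
case: t => Lt cst hne; have := hne _ (In_subtrees_root (Node Lt cst)).
case: Lt hne => [|k [|k' Lt]] hne //= _ hsz.
case: cst hne hsz => [|d cst] hne hsz; first by exists k.
have : labels d <> [::] by apply: hne; apply: In_subtrees_child (In_subtrees_root d); left.
by move: hsz; rewrite /= size_cat; case: (d) => [[|? ?] ?].
Qed.

Lemma leaves_star cs : (forall c, List.In c cs -> exists k, c = leaf k) ->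
  exists K, cs = map leaf K.
Proof.
elim: cs => [|c cs IH] H; first by exists [::].
have [k ->] := H c (or_introl erefl).
have [K ->] := IH (fun d hd => H d (or_intror hd)).
by exists (k :: K).
Qed.

Lemma flatten_leaves K : flatten (map all_labels (map leaf K)) = K.
Proof. by elim: K => //= k K ->. Qed.

Lemma good_gen N n T : n <= N -> good n T -> gen n T.
Proof.
elim: N n T => [|N IHN] n [L cs] hn hT; first by have := good_arity hT; lia.
have IH m T : m < n -> good m T -> gen m T by move=> hm; apply: IHN; lia.
case hbig: (has (fun c => 1 < size (all_labels c)) cs).
  have [cs1 [c [cs2 [ecs hc2]]]] := has_split hbig; subst cs.
  have hcT : List.In c (subtrees (Node L (cs1 ++ c :: cs2))).
    by apply: In_subtrees_child (In_subtrees_root c); rewrite In_cat; right; left.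
  have [[a [b hab]] _] := proj2 hT c hcT.
  have hab2 : a.+1 < b.
    have huc := subtree_uniq hcT (good_uniq hT).
    by move: hc2; rewrite (perm_size (intv_iota huc hab)) size_iota; lia.
  have [m [k [T1 [T2 [[h1 h2 [hm hk] hx <-] <-]]]]] := decomposition hT hab hab2.
  exact: gen_comp (IH _ _ hm h1) (IH _ _ hk h2) hx.
have [K eK] : exists K, cs = map leaf K.
  apply: leaves_star => c hc; apply: small_leaf.
    by move=> s hs; apply: (proj2 (proj2 hT s _)); apply: In_subtrees_child hc hs.
  by have := hasNot_In (negbT hbig) hc; rewrite -leqNgt.
subst cs; apply: star_gen; first exact: good_root hT.
by have := proj1 hT; rewrite /= flatten_leaves.
Qed.

Theorem mainTheorem10 (n : nat) (T : tree) :
  gen n T <-> (RW n T /\ recursively_labelled T /\ no_empty_node T).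
Proof.
rewrite good_iff; split; first exact: gen_good.
exact: good_gen (leqnn n).
Qed.
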